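(* Let $P$ be an $n\times n$ sign pattern and $A\in\mathcal{Q}(P)$. If $A$ has the nSSP, then there is $\epsilon>0$ such that for every $M\in M_n(\mathbb{R})$ with $\|M-A\|<\epsilon$ there exists $A'\in\mathcal{Q}(P)$ such that $A'$ is similar to $M$ and $A'$ has the nSSP.
   Context: $M_n(\mathbb{R})$ is the set of real $n\times n$ matrices and $\|\cdot\|$ the Frobenius norm. A sign pattern is an array with entries in $\{+,-,0\}$; its qualitative class $\mathcal{Q}(P)$ is the set of real matrices of the same size whose entries have the signs prescribed by $P$. $\circ$ is the entrywise product. A matrix $A\in M_n(\mathbb{R})$ has the non-symmetric strong spectral property (nSSP) if $X=O$ is the only matrix $X\in M_n(\mathbb{R})$ with $A\circ X=O$ and $AX^\top-X^\top A=O$. *)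

From mathcomp Require Import all_boot all_order all_algebra.
From mathcomp Require Import reals.
Set Implicit Arguments. Unset Strict Implicit. Unset Printing Implicit Defensive.
Import Order.TTheory GRing.Theory Num.Theory.
Local Open Scope ring_scope.

Inductive sgn := SPos | SNeg | SZero.

Definition sgn_holds {R : realType} (s : sgn) (x : R) : bool :=
  match s with
  | SPos => 0 < x
  | SNeg => x < 0
  | SZero => x == 0
  end.

Definition inQ {R : realType} (n : nat) (P : 'I_n -> 'I_n -> sgn) (A : 'M[R]_n) : Prop :=
  forall i j, sgn_holds (P i j) (A i j).

Definition hadamard {R : realType} (n : nat) (A B : 'M[R]_n) : 'M[R]_n :=
  \matrix_(i, j) (A i j * B i j).

Definition frob {R : realType} (n : nat) (A : 'M[R]_n) : R :=
  Num.sqrt (\sum_(i < n) \sum_(j < n) A i j ^+ 2).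

Definition nSSP {R : realType} (n : nat) (A : 'M[R]_n) : Prop :=
  forall X : 'M[R]_n,
    hadamard A X = 0 -> A *m X^T - X^T *m A = 0 -> X = 0.

Definition mx_similar {R : realType} (n : nat) (A B : 'M[R]_n) : Prop :=
  exists S : 'M[R]_n, S \in unitmx /\ B = invmx S *m A *m S.

(* Let L_A (Y, K) := Y o supp A + K A - A K. The nSSP of A says exactly that L_A
   is onto: X is orthogonal to the image of L_A iff A o X = 0 and A X^T = X^T A.
   For M = A + E, a matrix A + D with D supported on supp A is conjugate to M by
   1 + K as soon as L_A (D, K) = E + E K - K D; for small E this equation is solved
   by a contraction built from a right inverse of L_A, and gives small D and K.
   Then A + D keeps the sign pattern of A, and repeating the orthogonality
   computation for A + D, with the small error term [K, D], shows that A + D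
   still has the nSSP. *)

From HB Require Import structures.
From mathcomp Require Import all_boot all_order all_algebra.
From mathcomp Require Import reals all_classical all_analysis.
From mathcomp Require Import ring lra.
Import Order.TTheory GRing.Theory Num.Theory.
Import numFieldNormedType.Exports.
Set Implicit Arguments. Unset Strict Implicit. Unset Printing Implicit Defensive.
Local Open Scope ring_scope.

(* Completeness of matrices is known, but its join with the normed-module
   structure over [R : realType] is not inferred without this declaration. *)
HB.instance Definition _ (R : realType) (m k : nat) :=
  Uniform_isComplete.Build 'M[R]_(m, k) (@cauchy_cvg 'M[R]_(m, k)).

Section MatrixNorm.
Variable R : realFieldType.

Lemma mx_norm_entry p q (M : 'M[R]_(p, q)) i j : `|M i j| <= `|M|.
Proof.
by rewrite [leRHS]/Num.norm /= mx_normrE; apply/bigmax_geP; right; exists (i, j).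
Qed.

Lemma mx_norm_le p q (M : 'M[R]_(p, q)) c :
  0 <= c -> (forall i j, `|M i j| <= c) -> `|M| <= c.
Proof.
by move=> c0 Mc; rewrite [leLHS]/Num.norm /= mx_normrE; apply: bigmax_le => // -[i j] _; exact: Mc.
Qed.

Lemma mx_norm_mul p k q (A : 'M[R]_(p, k)) (B : 'M[R]_(k, q)) :
  `|A *m B| <= k%:R * `|A| * `|B|.
Proof.
apply: mx_norm_le => [|i j]; first by rewrite !mulr_ge0.
rewrite mxE (le_trans (ler_norm_sum _ _ _)) // -mulrA mulr_natl.
rewrite -[k in _ *+ k]card_ord -sumr_const; apply: ler_sum => l _.
by rewrite normrM ler_pM ?mx_norm_entry.
Qed.

Lemma mx_norm_vec_mx p q (u : 'rV[R]_(p * q)) : `|vec_mx u| <= `|u|.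
Proof. by apply: mx_norm_le => // i j; rewrite mxE mx_norm_entry. Qed.

Lemma mx_norm_mxvec p q (M : 'M[R]_(p, q)) : `|mxvec M| <= `|M|.
Proof.
apply: mx_norm_le => // i k; rewrite (ord1 i).
by case/mxvec_indexP: k => a b; rewrite mxvecE mx_norm_entry.
Qed.

Lemma mx_norm_lsubmx p q k (Z : 'M[R]_(p, q + k)) : `|lsubmx Z| <= `|Z|.
Proof. by apply: mx_norm_le => // i j; rewrite mxE mx_norm_entry. Qed.

Lemma mx_norm_rsubmx p q k (Z : 'M[R]_(p, q + k)) : `|rsubmx Z| <= `|Z|.
Proof. by apply: mx_norm_le => // i j; rewrite mxE mx_norm_entry. Qed.

Lemma unitmx1D n (K : 'M[R]_n) : n%:R * `|K| < 1 -> 1%:M + K \in unitmx.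
Proof.
move=> Ksmall; rewrite -row_free_unit -kermx_eq0; apply: contraT.
move=> /rowV0Pn [v /sub_kermxP vK v_neq0].
have vE : v = - (v *m K).
  by apply/eqP; rewrite -addr_eq0 -[v in v + _]mulmx1 -mulmxDr vK.
have : `|v| <= `|v| * (n%:R * `|K|).
  by rewrite mulrCA mulrA {1}vE normrN mx_norm_mul.
by rewrite ler_pMr ?normr_gt0 // leNgt Ksmall.
Qed.

End MatrixNorm.

Lemma mx_norm_frob (R : realType) n (X : 'M[R]_n) : `|X| <= frob X.
Proof.
have sqr_sum_ge0 (I : finType) (P : pred I) (f : I -> R) :
    0 <= \sum_(i | P i) f i ^+ 2.
  by rewrite sumr_ge0 // => i _; rewrite sqr_ge0.
apply: mx_norm_le => [|i j]; first exact: sqrtr_ge0.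
rewrite /frob -sqrtr_sqr ler_sqrt; last by rewrite sumr_ge0.
rewrite (bigD1 i) //= (bigD1 j) //= -addrA lerDl addr_ge0 ?sqr_sum_ge0 //.
by apply: sumr_ge0 => k _; apply: sumr_ge0 => l _; rewrite sqr_ge0.
Qed.

Lemma contraction_fixpoint_ball (R : realType) (V : completeNormedModType R)
    (F : V -> V) (q r : R) : 0 < r -> 0 <= q < 1 ->
  (forall x, `|x| <= r -> `|F x| <= r) ->
  (forall x y, `|x| <= r -> `|y| <= r -> `|F x - F y| <= q * `|x - y|) ->
  exists2 x, `|x| <= r & F x = x.
Proof.
move=> r0 /andP[q0 q1] Fball Flip.
pose U := closed_ball (0 : V) r.
have UE x : U x <-> `|x| <= r by rewrite /U closed_ballE //= /closed_ball_ /= sub0r normrN.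
have FU : {homo F : x / U x >-> U x} by move=> x /UE /Fball /UE.
have [|||x /UE xr xE] := @banach_fixed_point _ _ U (mkfun FU).
- exists (NngNum q0); split=> // -[x y] /= [/UE xr /UE yr]; exact: Flip.
- exact: closed_ball_closed.
- by exists 0; apply/UE; rewrite normr0 ltW.
by exists x.
Qed.

Section FrobeniusInnerProduct.
Variables (R : realFieldType) (n : nat).
Implicit Types U V X : 'M[R]_n.

Definition mxdot U X := \sum_i \sum_j U i j * X i j.

Lemma mxdot_trace U X : mxdot U X = \tr (U *m X^T).
Proof.
by apply: eq_bigr => i _; rewrite mxE; apply: eq_bigr => j _; rewrite !mxE.
Qed.

Lemma mxdot_mxvec U X : (mxvec U *m (mxvec X)^T) 0 0 = mxdot U X.
Proof.
rewrite mxE (reindex _ (curry_mxvec_bij _ _)) /= /mxdot pair_bigA.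
by apply: eq_bigr => -[i j] _ /=; rewrite !mxE !mxvecE.
Qed.

Lemma mxdotDl U V X : mxdot (U + V) X = mxdot U X + mxdot V X.
Proof. by rewrite !mxdot_trace mulmxDl mxtraceD. Qed.

Lemma mxdotBl U V X : mxdot (U - V) X = mxdot U X - mxdot V X.
Proof. by rewrite !mxdot_trace mulmxBl linearB. Qed.

Lemma mxdot_commutator K B X :
  mxdot (K *m B - B *m K) X = \tr (K *m (B *m X^T - X^T *m B)).
Proof.
rewrite mxdot_trace mulmxBl mulmxBr !linearB /= -!mulmxA.
by rewrite [\tr (B *m _)]mxtrace_mulC -mulmxA.
Qed.

Lemma mxdot_self_eq0 X : mxdot X X = 0 -> X = 0.
Proof.
have mul_self_ge0 (x : R) : 0 <= x * x by rewrite -expr2 sqr_ge0.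
have row_ge0 i : 0 <= \sum_j X i j * X i j by rewrite sumr_ge0.
move=> X0; apply/matrixP => i j; rewrite mxE.
have row_i0 := psumr_eq0P (fun i _ => row_ge0 i) X0 (i := i) isT.
have /eqP := psumr_eq0P (fun k _ => mul_self_ge0 (X i k)) row_i0 (i := j) isT.
by rewrite mulf_eq0 orbb => /eqP.
Qed.

Lemma mx_norm_mxdot U X : `|mxdot U X| <= n%:R ^+ 2 * `|U| * `|X|.
Proof.
rewrite (le_trans (ler_norm_sum _ _ _)) // expr2 -!mulrA mulr_natl.
rewrite -[n in _ *+ n]card_ord -sumr_const; apply: ler_sum => i _.
rewrite (le_trans (ler_norm_sum _ _ _)) // mulr_natl.
rewrite -[n in _ *+ n]card_ord -sumr_const; apply: ler_sum => j _.
by rewrite normrM ler_pM ?mx_norm_entry.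
Qed.

Lemma sqr_mx_norm_le_mxdot X : `|X| ^+ 2 <= mxdot X X.
Proof.
have sqr_sum_ge0 (I : finType) (P : pred I) (f : I -> R) :
    0 <= \sum_(i | P i) f i * f i.
  by rewrite sumr_ge0 // => i _; rewrite -expr2 sqr_ge0.
have [->|] := eqVneq X 0; first by rewrite normr0 expr0n mxdot_trace !linear0.
rewrite -normr_eq0 => /mx_norm_neq0 [[i j] /= Xij].
rewrite -[`|X|]/(mx_norm X) Xij real_normK ?num_real // expr2.
rewrite /mxdot (bigD1 i) //= (bigD1 j) //= -addrA lerDl addr_ge0 //.
by rewrite sumr_ge0.
Qed.

End FrobeniusInnerProduct.

Section Transversality.
Variables (R : realType) (n : nat) (A : 'M[R]_n).
Implicit Types X Y W : 'M[R]_n.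

Definition supp_mask Y : 'M[R]_n :=
  \matrix_(i, j) (if A i j == 0 then 0 else Y i j).

Fact supp_mask_linear : linear supp_mask.
Proof.
by move=> a Y Y'; apply/matrixP => i j; rewrite !mxE; case: ifP; rewrite ?mulr0 ?addr0.
Qed.

HB.instance Definition _ := GRing.isLinear.Build R _ _ _ supp_mask supp_mask_linear.

Lemma supp_mask_id Y : supp_mask (supp_mask Y) = supp_mask Y.
Proof. by apply/matrixP => i j; rewrite !mxE; case: eqP. Qed.

Lemma mxdot_supp_mask Y X : mxdot (supp_mask Y) X = mxdot Y (supp_mask X).
Proof.
apply: eq_bigr => i _; apply: eq_bigr => j _.
by rewrite !mxE; case: ifP; rewrite ?mulr0 ?mul0r.
Qed.

Lemma mx_norm_supp_mask Y : `|supp_mask Y| <= `|Y|.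
Proof.
apply: mx_norm_le => // i j; rewrite mxE.
by case: ifP; rewrite ?normr0 ?mx_norm_entry.
Qed.

Lemma hadamard_eq0 X : hadamard A X = 0 <-> supp_mask X = 0.
Proof.
split=> /matrixP X0; apply/matrixP => i j; have := X0 i j; rewrite !mxE.
  by case: eqP => // /eqP Aij0 /eqP; rewrite mulf_eq0 (negbTE Aij0) => /eqP.
by case: eqP => [->|_ ->]; rewrite ?mul0r ?mulr0.
Qed.

(* [Z = row_mx Y K] encodes a pair (Y, K); [transv] is the derivative at (0, 0)
   of (Y, K) |-> (1 + K) (A + supp_mask Y) (1 + K)^-1. *)
Definition transv (Z : 'M[R]_(n, n + n)) : 'M[R]_n :=
  supp_mask (lsubmx Z) + rsubmx Z *m A - A *m rsubmx Z.

Fact transv_linear : linear transv.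
Proof.
move=> a Z Z'; rewrite /transv !linearP /= mulmxDl -scalemxAl.
by apply/matrixP => i j; rewrite !mxE; ring.
Qed.

HB.instance Definition _ := GRing.isLinear.Build R _ _ _ transv transv_linear.

Definition transv_mx := lin_mx transv.

Lemma transv_orthogonal X :
  (forall Z, mxdot (transv Z) X = 0) -> hadamard A X = 0 /\ A *m X^T - X^T *m A = 0.
Proof.
move=> Xperp; split.
  apply/hadamard_eq0/mxdot_self_eq0.
  have := Xperp (row_mx X 0).
  rewrite /transv row_mxKl row_mxKr mul0mx mulmx0 subr0 addr0.
  by rewrite -{1}supp_mask_id mxdot_supp_mask.
set C := A *m X^T - X^T *m A; apply: mxdot_self_eq0.
have := Xperp (row_mx 0 C^T).
rewrite /transv row_mxKl row_mxKr linear0 add0r mxdot_commutator.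
by rewrite -/C mxdot_trace mxtrace_mulC.
Qed.

Lemma transv_full : nSSP A -> row_full transv_mx.
Proof.
move=> A_nSSP; apply: contraT => not_full.
have : ~~ row_free transv_mx^T by rewrite /row_free mxrank_tr.
rewrite -kermx_eq0 => /rowV0Pn [u /sub_kermxP u_ker u_neq0].
have uT_ker : transv_mx *m u^T = 0 by rewrite -[transv_mx]trmxK -trmx_mul u_ker trmx0.
have Xperp Z : mxdot (transv Z) (vec_mx u) = 0.
  by rewrite -mxdot_mxvec -mul_vec_lin vec_mxK -mulmxA uT_ker mulmx0 mxE.
have [had comm] := transv_orthogonal Xperp.
by move: u_neq0; rewrite -(vec_mxK u) (A_nSSP _ had comm) linear0 eqxx.
Qed.

Definition transv_rinv W : 'M[R]_(n, n + n) := vec_mx (mxvec W *m pinvmx transv_mx).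

Fact transv_rinv_linear : linear transv_rinv.
Proof. by move=> a W W'; rewrite /transv_rinv !linearP /= mulmxDl -scalemxAl linearP. Qed.

HB.instance Definition _ := GRing.isLinear.Build R _ _ _ transv_rinv transv_rinv_linear.

Lemma transv_rinvK W : row_full transv_mx -> transv (transv_rinv W) = W.
Proof.
move=> full; apply: (can_inj (@mxvecK _ n n)).
by rewrite -mul_vec_lin vec_mxK mulmxKpV // submx_full.
Qed.

Definition transv_rinv_bound := (n * n)%:R * `|pinvmx transv_mx| + 1.

Lemma transv_rinv_bound_ge1 : 1 <= transv_rinv_bound.
Proof. by rewrite lerDr mulr_ge0. Qed.

Lemma mx_norm_transv_rinv W : `|transv_rinv W| <= transv_rinv_bound * `|W|.
Proof.
rewrite (le_trans (mx_norm_vec_mx _)) // (le_trans (mx_norm_mul _ _)) //.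
rewrite mulrAC (le_trans (ler_wpM2l _ (mx_norm_mxvec W))) ?mulr_ge0 //.
by rewrite ler_wpM2r // lerDl.
Qed.

End Transversality.

Lemma mx_norm_commutator (R : realFieldType) n (K D : 'M[R]_n) :
  `|K *m D - D *m K| <= 2 * n%:R * `|K| * `|D|.
Proof.
rewrite (le_trans (ler_normB _ _)) // (le_trans (lerD (mx_norm_mul _ _) (mx_norm_mul _ _))) //.
by have -> : n%:R * `|K| * `|D| + n%:R * `|D| * `|K| = 2 * n%:R * `|K| * `|D| by ring.
Qed.

Lemma nSSP_near (R : realType) n (A B : 'M[R]_n) (r : R) :
  nSSP A -> (forall i j, (B i j == 0) = (A i j == 0)) -> `|B - A| <= r ->
  2 * n%:R ^+ 3 * transv_rinv_bound A * r < 1 -> nSSP B.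
Proof.
move=> A_nSSP sameZ BAr small X hadX commX.
set c := transv_rinv_bound A; set D := B - A.
set Z := transv_rinv A X; set K := rsubmx Z.
(* Write X = transv (Y, K); against X, the pattern part and [K, B] vanish, leaving [K, B - A]. *)
have XE : X = supp_mask A (lsubmx Z) + (K *m B - B *m K) - (K *m D - D *m K).
  rewrite -{1}(transv_rinvK X (transv_full A_nSSP)) /transv /D mulmxBr mulmxBl.
  by apply/matrixP => i j; rewrite !mxE; ring.
have mask_perp : mxdot (supp_mask A (lsubmx Z)) X = 0.
  rewrite mxdot_supp_mask.
  have -> : supp_mask A X = supp_mask B X by apply/matrixP => i j; rewrite !mxE sameZ.
  by rewrite (proj1 (hadamard_eq0 _ _) hadX) mxdot_trace trmx0 mulmx0 linear0.
have comm_perp : mxdot (K *m B - B *m K) X = 0.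
  by rewrite mxdot_commutator commX mulmx0 linear0.
have XX : mxdot X X = - mxdot (K *m D - D *m K) X.
  by rewrite {1}XE mxdotBl mxdotDl mask_perp comm_perp add0r sub0r.
have K_le : `|K| <= c * `|X| := le_trans (mx_norm_rsubmx _) (mx_norm_transv_rinv _ _).
have comm_le : `|K *m D - D *m K| <= 2 * n%:R * (c * `|X|) * r.
  apply: le_trans (mx_norm_commutator K D) _.
  rewrite -[leLHS]mulrA -[leRHS]mulrA.
  by rewrite ler_wpM2l ?mulr_ge0 // ler_pM.
have X_le : `|X| ^+ 2 <= (2 * n%:R ^+ 3 * c * r) * `|X| ^+ 2.
  apply: le_trans (sqr_mx_norm_le_mxdot X) _; rewrite XX.
  apply: le_trans (ler_norm _) _; rewrite normrN.
  apply: le_trans (mx_norm_mxdot _ _) _.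
  have -> : 2 * n%:R ^+ 3 * c * r * `|X| ^+ 2 =
      n%:R ^+ 2 * (2 * n%:R * (c * `|X|) * r) * `|X| by ring.
  by rewrite ler_wpM2r // ler_wpM2l.
have : `|X| ^+ 2 * (1 - 2 * n%:R ^+ 3 * c * r) <= 0.
  by rewrite mulrBr mulr1 subr_le0 mulrC.
rewrite pmulr_lle0 ?subr_gt0 // => X2_le0.
by apply/eqP; rewrite -normr_eq0 -sqrf_eq0 eq_le X2_le0 sqr_ge0.
Qed.

Section SimilarPerturbation.
Variables (R : realType) (n : nat) (A E : 'M[R]_n) (c m r : R).
Hypotheses (A_full : row_full (transv_mx A)) (c_ge1 : 1 <= c).
Hypothesis transv_rinv_le : forall W, `|transv_rinv A W| <= c * `|W|.
Hypotheses (m_ge1 : 1 <= m) (n_le_m : n%:R <= m).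
Hypotheses (r_gt0 : 0 < r) (r_small : c * m * r <= 1 / 8).
Hypothesis E_small : c * m * `|E| <= r / 4.

Let c_ge0 : 0 <= c := le_trans ler01 c_ge1.
Let m_ge0 : 0 <= m := le_trans ler01 m_ge1.
Let r_le1 : r <= 1.
Proof.
have : r <= c * m * r by apply: ler_peMl; [exact: ltW | exact: mulr_ege1].
move: r_small; lra.
Qed.

Let mx_norm_mul_m (X Y : 'M[R]_n) : `|X *m Y| <= m * `|X| * `|Y|.
Proof.
apply: le_trans (mx_norm_mul X Y) _.
by rewrite -!mulrA ler_wpM2r ?mulr_ge0.
Qed.

(* A fixed point Z = row_mx Y K of F solves transv Z = E + E K - K D, with
   D = supp_mask A Y, i.e. (A + E) (1 + K) = (1 + K) (A + D). *)
Let F (Z : 'M[R]_(n, n + n)) :=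
  transv_rinv A (E + E *m rsubmx Z - rsubmx Z *m supp_mask A (lsubmx Z)).

Let F_ball Z : `|Z| <= r -> `|F Z| <= r.
Proof.
move=> Zr; apply: le_trans (transv_rinv_le _) _.
have K_le : `|rsubmx Z| <= r := le_trans (mx_norm_rsubmx Z) Zr.
have Y_le : `|supp_mask A (lsubmx Z)| <= r.
  exact: le_trans (mx_norm_supp_mask _ _) (le_trans (mx_norm_lsubmx Z) Zr).
have W_le : `|E + E *m rsubmx Z - rsubmx Z *m supp_mask A (lsubmx Z)|
    <= `|E| + m * `|E| * r + m * r * r.
  rewrite (le_trans (ler_normB _ _)) // (le_trans (lerD (ler_normD _ _) (lexx _))) //.
  rewrite -!addrA lerD2l lerD //.
    by apply: le_trans (mx_norm_mul_m _ _) _; rewrite ler_wpM2l ?mulr_ge0.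
  apply: le_trans (mx_norm_mul_m _ _) _.
  by rewrite -!mulrA ler_wpM2l // ler_pM.
apply: le_trans (ler_wpM2l c_ge0 W_le) _.
have cE_le : c * `|E| <= c * m * `|E| by rewrite -mulrA ler_wpM2l // ler_peMl.
have := ler_wpM2r (ltW r_gt0) E_small; have := ler_wpM2r (ltW r_gt0) r_small.
move: cE_le E_small r_le1 r_gt0; nra.
Qed.

Let F_lipschitz Z1 Z2 : `|Z1| <= r -> `|Z2| <= r ->
  `|F Z1 - F Z2| <= 2^-1 * `|Z1 - Z2|.
Proof.
move=> Z1r Z2r; rewrite /F -linearB /=; apply: le_trans (transv_rinv_le _) _.
set K1 := rsubmx Z1; set K2 := rsubmx Z2.
set Y1 := supp_mask A (lsubmx Z1); set Y2 := supp_mask A (lsubmx Z2).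
set d := `|Z1 - Z2|.
have -> : E + E *m K1 - K1 *m Y1 - (E + E *m K2 - K2 *m Y2) =
    E *m (K1 - K2) - ((K1 - K2) *m Y1 + K2 *m (Y1 - Y2)).
  by rewrite !mulmxBr !mulmxBl; apply/matrixP => i j; rewrite !mxE; ring.
have dK_le : `|K1 - K2| <= d by rewrite -linearB mx_norm_rsubmx.
have dY_le : `|Y1 - Y2| <= d.
  by rewrite -linearB (le_trans (mx_norm_supp_mask _ _)) // -linearB mx_norm_lsubmx.
have K2_le : `|K2| <= r := le_trans (mx_norm_rsubmx Z2) Z2r.
have Y1_le : `|Y1| <= r.
  exact: le_trans (mx_norm_supp_mask _ _) (le_trans (mx_norm_lsubmx Z1) Z1r).
have W_le : `|E *m (K1 - K2) - ((K1 - K2) *m Y1 + K2 *m (Y1 - Y2))|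
    <= m * `|E| * d + m * d * r + m * r * d.
  rewrite (le_trans (ler_normB _ _)) // (le_trans (lerD (lexx _) (ler_normD _ _))) //.
  rewrite addrA !lerD //; apply: le_trans (mx_norm_mul_m _ _) _.
  - by rewrite ler_wpM2l ?mulr_ge0.
  - by rewrite -!mulrA ler_wpM2l // ler_pM.
  - by rewrite -!mulrA ler_wpM2l // ler_pM.
apply: le_trans (ler_wpM2l c_ge0 W_le) _.
have := ler_wpM2r (normr_ge0 (Z1 - Z2)) E_small.
have := ler_wpM2r (normr_ge0 (Z1 - Z2)) r_small.
move: r_le1 r_gt0 (normr_ge0 (Z1 - Z2)); rewrite -/d; nra.
Qed.

Lemma similar_supp_perturbation :
  exists2 Y, `|Y| <= r & mx_similar (A + supp_mask A Y) (A + E).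
Proof.
have half_bound : 0 <= (2^-1 : R) < 1 by apply/andP; split; lra.
have [Z Zr FZ] := @contraction_fixpoint_ball R 'M[R]_(n, n + n) F _ _
  r_gt0 half_bound F_ball F_lipschitz.
set K := rsubmx Z; set D := supp_mask A (lsubmx Z).
have transv_Z : D + K *m A - A *m K = E + E *m K - K *m D.
  by have := transv_rinvK (E + E *m K - K *m D) A_full; rewrite -/(F Z) FZ.
have conj : (A + E) *m (1%:M + K) = (1%:M + K) *m (A + D).
  apply/eqP; rewrite -subr_eq0.
  have -> : (A + E) *m (1%:M + K) - (1%:M + K) *m (A + D) =
      (E + E *m K - K *m D) - (D + K *m A - A *m K).
    by rewrite !mulmxDr !mulmxDl !mulmx1 !mul1mx; apply/matrixP => i j; rewrite !mxE; ring.
  by rewrite transv_Z subrr.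
have K_unit : 1%:M + K \in unitmx.
  apply: unitmx1D; have K_le : `|K| <= r := le_trans (mx_norm_rsubmx Z) Zr.
  have := ler_pM (ler0n _ n) (normr_ge0 K) n_le_m K_le.
  have : m * r <= c * m * r.
    by rewrite -mulrA; apply: ler_peMl => //; rewrite mulr_ge0 // ltW.
  move: r_small; lra.
exists (lsubmx Z); first exact: le_trans (mx_norm_lsubmx Z) Zr.
exists (invmx (1%:M + K)); split; first by rewrite unitmx_inv.
by rewrite invmxK -conj mulmxK.
Qed.

End SimilarPerturbation.

Section SignPattern.
Variables (R : realType) (n : nat) (P : 'I_n -> 'I_n -> sgn).
Implicit Types A B Y : 'M[R]_n.

Definition min_nz_entry A : R :=
  \big[Num.min/1]_(ij : 'I_n * 'I_n) (if A ij.1 ij.2 == 0 then 1 else `|A ij.1 ij.2|).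

Lemma min_nz_entry_gt0 A : 0 < min_nz_entry A.
Proof.
rewrite /min_nz_entry; elim/big_ind: _ => // [x y x0 y0|[i j] _ /=]; first by rewrite lt_min x0 y0.
by case: eqP => // /eqP; rewrite normr_gt0.
Qed.

Lemma min_nz_entry_le A i j : A i j != 0 -> min_nz_entry A <= `|A i j|.
Proof. by move=> Aij0; rewrite /min_nz_entry (bigD1 (i, j)) //= (negbTE Aij0) ge_min lexx. Qed.

Lemma inQ_add_supp_mask A Y :
  inQ P A -> `|Y| < min_nz_entry A -> inQ P (A + supp_mask A Y).
Proof.
move=> AP Y_lt i j; have := AP i j; rewrite !mxE.
have Yij_lt : A i j != 0 -> `|Y i j| < `|A i j|.
  by move=> Aij0; rewrite (le_lt_trans (mx_norm_entry Y i j)) // (lt_le_trans Y_lt) ?min_nz_entry_le.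
case: (P i j) => /= hA.
- have Aij0 := gt_eqF hA; rewrite Aij0.
  by move: (Yij_lt (negbT Aij0)); rewrite (gtr0_norm hA) ltr_norml => /andP[]; lra.
- have Aij0 := lt_eqF hA; rewrite Aij0.
  by move: (Yij_lt (negbT Aij0)); rewrite (ltr0_norm hA) ltr_norml => /andP[]; lra.
- by rewrite hA (eqP hA) addr0.
Qed.

Lemma inQ_eq0 A B i j : inQ P A -> inQ P B -> (B i j == 0) = (A i j == 0).
Proof.
move=> /(_ i j) AP /(_ i j) BP; move: AP BP.
by case: (P i j) => /= hA hB; rewrite ?(gt_eqF hA) ?(gt_eqF hB) ?(lt_eqF hA) ?(lt_eqF hB) ?hA ?hB.
Qed.

End SignPattern.

Lemma perturbation_radius (R : realFieldType) (c m k a : R) :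
  1 <= c -> 1 <= m -> k <= m -> 0 < a ->
  exists2 r, [/\ 0 < r, r < a, c * m * r <= 1 / 8 & 2 * k * c * r < 1] &
    exists2 eps, 0 < eps & forall e, e < eps -> c * m * e <= r / 4.
Proof.
move=> c_ge1 m_ge1 k_le_m a_gt0.
have c_gt0 : 0 < c := lt_le_trans ltr01 c_ge1.
have cm_gt0 : 0 < c * m := lt_le_trans ltr01 (mulr_ege1 c_ge1 m_ge1).
have cm_neq0 : (m != 0) && (c != 0) by rewrite -negb_or -mulf_eq0 mulrC gt_eqF.
pose r := Num.min (8 * c * m)^-1 (a / 2).
have r_gt0 : 0 < r by rewrite lt_min invr_gt0 -mulrA mulr_gt0 ?divr_gt0.
have r_small : c * m * r <= 1 / 8.
  have r_le : r <= (8 * c * m)^-1 by rewrite ge_min lexx.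
  apply: le_trans (ler_wpM2l (ltW cm_gt0) r_le) _.
  by have -> : c * m * (8 * c * m)^-1 = 1 / 8 by field.
exists r; first split=> //.
- by rewrite gt_min ltr_pdivrMr // ltr_pMr ?ltr1n ?orbT.
- have := ler_wpM2r (ltW (mulr_gt0 c_gt0 r_gt0)) k_le_m.
  have -> : 2 * k * c * r = 2 * (k * (c * r)) by ring.
  have : m * (c * r) = c * m * r by ring.
  move: r_small; lra.
exists (r / (4 * c * m)); first by rewrite divr_gt0 // -mulrA mulr_gt0.
move=> e /ltW e_lt; apply: le_trans (ler_wpM2l (ltW cm_gt0) e_lt) _.
by have -> : c * m * (r / (4 * c * m)) = r / 4 by field.
Qed.

Theorem theorem5p2 (R : realType) (n : nat) (P : 'I_n -> 'I_n -> sgn)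
    (A : 'M[R]_n) :
  inQ P A -> nSSP A ->
  exists eps : R, 0 < eps /\
    forall M : 'M[R]_n, frob (M - A) < eps ->
      exists A' : 'M[R]_n, inQ P A' /\ mx_similar A' M /\ nSSP A'.
Proof.
move=> AP A_nSSP; have c_ge1 := transv_rinv_bound_ge1 A.
(* m bounds both the factor n of matrix products and the n^3 of [nSSP_near]. *)
pose m : R := (n%:R + 1) ^+ 3.
have m_ge1 : 1 <= m by rewrite exprn_ege1 // lerDr.
have n_le_m : n%:R <= m by rewrite (@le_trans _ _ (n%:R + 1)) ?lerDl // ler_eXnr // lerDr.
have n3_le_m : n%:R ^+ 3 <= m by rewrite lerXn2r ?nnegrE ?addr_ge0 // lerDl.
have [r [r_gt0 r_lt r_small r_nSSP] [eps eps_gt0 eps_small]] :=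
  perturbation_radius c_ge1 m_ge1 n3_le_m (min_nz_entry_gt0 A).
exists eps; split=> // M M_near.
have E_small := eps_small _ (le_lt_trans (mx_norm_frob (M - A)) M_near).
have [Y Y_le] := similar_supp_perturbation (transv_full A_nSSP) c_ge1
  (mx_norm_transv_rinv A) m_ge1 n_le_m r_gt0 r_small E_small.
rewrite [A + (M - A)]addrC subrK => similar.
have A'P := inQ_add_supp_mask AP (le_lt_trans Y_le r_lt).
exists (A + supp_mask A Y); split=> //; split=> //.
apply: (nSSP_near (r := r)) A_nSSP (fun i j => inQ_eq0 i j AP A'P) _ r_nSSP.
by rewrite addrC addKr (le_trans (mx_norm_supp_mask _ _) Y_le).
Qed.
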